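(* Let $n\ge 1$ be an integer, and suppose that $A,B,C\subseteq\mathbb{Z}_5^n$ satisfy $(A+B)\cap C=\emptyset$, where $A+B=\{a+b:a\in A,b\in B\}$. If $\min\{|A|,|B|\}>2\cdot5^{n-1}$ and $C\ne\emptyset$, then $|A|+|B|+2|C|\le 6\cdot5^{n-1}$.
   Context: $\mathbb{Z}_5^n$ denotes the elementary abelian $5$-group of rank $n$. *)

From mathcomp Require Import all_boot all_algebra.
Set Implicit Arguments. Unset Strict Implicit. Unset Printing Implicit Defensive.
Import GRing.Theory.
Local Open Scope ring_scope.

Definition Z5n (n : nat) := 'rV['Z_5]_n.

Definition sumset (n : nat) (A B : {set Z5n n}) : {set Z5n n} :=
  [set a + b | a in A, b in B].

From mathcomp Require Import all_boot all_algebra all_fingroup.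
From mathcomp Require Import zify.

(* Hamidoune's isoperimetric method.  Among all nonempty X with X Y <> G,
   or X Y^-1 <> G, take one minimising the excess |X Z| - |X| and, among
   those, of least size: an atom.  Complements show that an atom fills at
   most half of G, and submodularity of X |-> |X Z| shows that an atom
   meeting one of its left translates equals it, so an atom is a coset
   K x of a subgroup K.  If every proper subgroup has order dividing N and
   |Y| > 2N, then |K| divides both N and the excess k, while
   2N < |Y| <= |X Z| = |K| + k; hence k >= 2N, i.e. |X Y| >= |X| + 2N for
   every such X.  For A B disjoint from C, C B^-1 avoids A and C^-1 A
   avoids B^-1; with |G| = 5 * 5^(n-1) the two bounds add up to the claim. *)

Set Implicit Arguments. Unset Strict Implicit. Unset Printing Implicit Defensive.

Lemma lex_arg_minn (T : finType) (P : pred T) (f g : T -> nat) x0 : P x0 ->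
  exists2 x, P x & forall y, P y -> f x <= f y /\ (f y = f x -> g x <= g y).
Proof.
move=> Px0; case: (arg_minnP f Px0) => x1 Px1 min_f.
have P'x1 : [pred y | P y && (f y == f x1)] x1 by rewrite /= Px1 eqxx.
case: (arg_minnP g P'x1) => x /andP[Px /eqP fx] min_g.
exists x => // y Py; rewrite fx; split; first exact: min_f.
by move=> fy; apply: min_g; rewrite /= Py fy eqxx.
Qed.

Section SetProducts.
Variable gT : finGroupType.
Implicit Types (X W Z : {set gT}) (g x z : gT).
Local Open Scope group_scope.

Lemma leq_card_mull X Z z : z \in Z -> #|X| <= #|X * Z|.
Proof.
by move=> Zz; rewrite -(card_rcoset X z) subset_leq_card // mulgS ?sub1set.
Qed.

Lemma leq_card_mulr X Z x : x \in X -> #|Z| <= #|X * Z|.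
Proof.
by move=> Xx; rewrite -(card_lcoset Z x) subset_leq_card // mulSg ?sub1set.
Qed.

Lemma card_lcoset_mul g X Z : #|(g *: X) * Z| = #|X * Z|.
Proof. by rewrite -mulgA card_lcoset. Qed.

Lemma card_mul_submod X W Z :
  #|(X :&: W) * Z| + #|(X :|: W) * Z| <= #|X * Z| + #|W * Z|.
Proof.
rewrite mulUg -(cardsUI (X * Z)) addnC leq_add2l subset_leq_card //.
by rewrite subsetI !mulSg ?subsetIl ?subsetIr.
Qed.

Lemma mul_setC_invg_sub X Z : ~: (X * Z) * Z^-1 \subset ~: X.
Proof.
apply/subsetP => _ /mulsgP[w z XZw Zz ->]; rewrite !inE in XZw Zz *.
by apply: contra XZw => Xwz; rewrite -(mulgK z w) mem_mulg.
Qed.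

Lemma mul_disjoint_sub X W Z :
  X * W :&: Z = set0 -> Z * W^-1 \subset ~: X.
Proof.
move=> XWZ; apply/subsetP => _ /mulsgP[z w Zz Ww ->]; rewrite !inE in Ww *.
apply/negP => Xzw; have := mem_mulg Xzw Ww; rewrite mulgK => XWz.
by have := in_set0 z; rewrite -XWZ inE XWz Zz.
Qed.

Lemma dvdn_card_mulG (K : {group gT}) Z : #|K| %| #|Z * K|.
Proof.
have actsK : [acts K, on Z * K | 'R].
  apply/actsP => k Kk y; have ZKk : (Z * K) :* k^-1 = Z * K.
    by rewrite -mulgA rcoset_id ?groupV.
  by rewrite /= -{2}ZKk mem_rcoset invgK.
have blocks : {in orbit 'R K @: (Z * K), forall B : {set gT}, #|B| = #|K|}.
  by move=> _ /imsetP[y _ ->]; rewrite orbitR card_lcoset.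
by rewrite (card_uniform_partition blocks (orbit_partition actsK)) dvdn_mull.
Qed.

Lemma dvdn_card_Gmul (K : {group gT}) Z : #|K| %| #|K * Z|.
Proof. by rewrite -(card_invg (K * Z)) invMg invGid dvdn_card_mulG. Qed.

Lemma translation_stable_rcoset X x : x \in X ->
  (forall g y, y \in X -> g * y \in X -> g *: X = X) ->
  exists K : {group gT}, X = K :* x.
Proof.
move=> Xx stabX.
have memXx y : (y \in X :* x^-1) = (y * x \in X) by rewrite mem_rcoset invgK.
have K_group : group_set (X :* x^-1).
  apply/group_setP; split=> [|g h]; rewrite !memXx ?mul1g // => Xgx Xhx.
  by rewrite -mulgA -(stabX g x) // mem_lcoset mulKg.
by exists (Group K_group); rewrite /= -rcosetM mulVg rcoset1.
Qed.

End SetProducts.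

Lemma proper_subgroup_dvdn (gT : finGroupType) p m (H : {group gT}) :
  prime p -> #|gT| = p ^ m.+1 -> H \proper [set: gT] -> #|H| %| p ^ m.
Proof.
move=> p_pr cardG; rewrite properEcard subsetT cardsT cardG /= => H_lt.
have := cardSg (subsetT H); rewrite cardsT cardG.
case/(dvdn_pfactor _ _ p_pr) => j _ cardH; move: H_lt.
by rewrite cardH ltn_exp2l ?prime_gt1 // ltnS => j_le; rewrite dvdn_exp2l.
Qed.

Section Atom.
Variables (gT : finGroupType) (Y : {set gT}).
Implicit Types W : {set gT}.
Local Open Scope group_scope.

(* Candidates are pairs (b, X) standing for X * Y (b = true) or X * Y^-1
   (b = false): minimising over both lets an atom be compared with the
   complement of its own product. *)
Definition side (b : bool) : {set gT} := if b then Y else Y^-1.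

Definition fragment (p : bool * {set gT}) : bool :=
  (0 < #|p.2|) && (#|p.2 * side p.1| < #|gT|).

Definition excess (p : bool * {set gT}) : nat := #|p.2 * side p.1| - #|p.2|.

Lemma fragmentE b W : fragment (b, W) = (0 < #|W|) && (#|W * side b| < #|gT|).
Proof. by []. Qed.

Lemma excessE b W : excess (b, W) = #|W * side b| - #|W|.
Proof. by []. Qed.

Lemma card_side b : #|side b| = #|Y|.
Proof. by case: b; rewrite //= card_invg. Qed.

Lemma side_negb b : side (~~ b) = (side b)^-1.
Proof. by case: b; rewrite /= ?invgK. Qed.

Hypothesis Y_gt0 : 0 < #|Y|.

Lemma leq_card_mul_side W b : #|W| <= #|W * side b|.
Proof.
have [z Zz] : exists z, z \in side b by apply/card_gt0P; rewrite card_side.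
exact: leq_card_mull Zz.
Qed.

Variables (b : bool) (X : {set gT}).
Hypothesis fragX : fragment (b, X).
Hypothesis atomX : forall b' W, fragment (b', W) ->
  excess (b, X) <= excess (b', W) /\
  (excess (b', W) = excess (b, X) -> #|X| <= #|W|).

Local Notation Z := (side b).
Local Notation k := (excess (b, X)).

Lemma atom_expands W :
  0 < #|W| -> #|W| + k <= #|gT| -> #|W| + k <= #|W * Z|.
Proof.
move=> W_gt0 W_small; have WZ := leq_card_mul_side W b.
case: (ltnP #|W * Z| #|gT|) => [WZ_lt | WZ_ge]; last exact: leq_trans WZ_ge.
have [] := atomX (b' := b) (W := W); first by rewrite fragmentE W_gt0.
by rewrite !excessE => excess_ge _; lia.
Qed.

Lemma atom_card_le : 2 * #|X| + k <= #|gT|.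
Proof.
move: fragX; rewrite fragmentE => /andP[X_gt0 XZ_lt].
(* Cardinalities are restated with explicit types: the same set reaches its
   finType through different canonical paths, which lia would treat as
   distinct atoms. *)
pose Xd : {set gT} := ~: (X * Z).
have XdZ : #|Xd * side (~~ b)| <= #|~: X|.
  by rewrite side_negb subset_leq_card ?mul_setC_invg_sub.
have cXC : #|X| + #|~: X| = #|gT| := cardsC X.
have cXZC : #|X * Z| + #|Xd| = #|gT| := cardsC (X * Z).
have XZ := leq_card_mul_side X b; have XdZ' := leq_card_mul_side Xd (~~ b).
have fragXd : fragment (~~ b, Xd) by rewrite fragmentE; apply/andP; split; lia.
have [] := atomX fragXd; rewrite !excessE => excess_ge /(_ ltac:(lia)).
lia.
Qed.

Lemma atom_translate g y : y \in X -> g * y \in X -> g *: X = X.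
Proof.
move=> Xy Xgy; pose X' : {set gT} := g *: X.
have cX' : #|X'| = #|X| := card_lcoset X g.
have cX'Z : #|X' * Z| = #|X * Z| := card_lcoset_mul g X Z.
have I_gt0 : 0 < #|X :&: X'|.
  apply/card_gt0P; exists (g * y).
  by rewrite inE Xgy mem_lcoset mulKg.
have cI : #|X :&: X'| <= #|X| by rewrite subset_leq_card ?subsetIl.
have cIZ : #|(X :&: X') * Z| <= #|X * Z|.
  by rewrite subset_leq_card ?mulSg ?subsetIl.
have cUI : #|X :|: X'| + #|X :&: X'| = #|X| + #|X'| := cardsUI X X'.
have submod := card_mul_submod X X' Z.
have small := atom_card_le.
have expI := atom_expands I_gt0 ltac:(lia).
have expU := atom_expands (W := X :|: X') ltac:(lia) ltac:(lia).
move: fragX; rewrite fragmentE => /andP[_ XZ_lt].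
have [] := atomX (b' := b) (W := X :&: X').
  by rewrite fragmentE I_gt0 (leq_ltn_trans cIZ XZ_lt).
rewrite !excessE in small expI expU * => _ /(_ ltac:(lia)) X_le.
have /eqP XX' : X :&: X' == X by rewrite eqEcard subsetIl X_le.
by apply/eqP; rewrite eq_sym eqEcard -{1}XX' subsetIr card_lcoset leqnn.
Qed.

End Atom.

Section Expansion.
Variables (gT : finGroupType) (N : nat).
Hypothesis proper_dvdn :
  forall H : {group gT}, H \proper [set: gT] -> #|H| %| N.
Local Open Scope group_scope.

Lemma card_mul_expansion (X0 Y : {set gT}) :
  2 * N < #|Y| -> 0 < #|X0| -> #|X0 * Y| < #|gT| -> #|X0| + 2 * N <= #|X0 * Y|.
Proof.
move=> Y_gt X0_gt0 X0Y_lt; have Y_gt0 : 0 < #|Y| by lia.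
have frag0 : fragment Y (true, X0) by rewrite fragmentE X0_gt0.
have [[b X] fragX atomX] := lex_arg_minn (excess Y) (fun p => #|p.2|) frag0.
have {}atomX b' W : fragment Y (b', W) -> excess Y (b, X) <= excess Y (b', W) /\
    (excess Y (b', W) = excess Y (b, X) -> #|X| <= #|W|) := atomX (b', W).
have := fragX; rewrite fragmentE => /andP[X_gt0 _].
have [x Xx] : exists x, x \in X by apply/card_gt0P.
have [K defX] :=
  translation_stable_rcoset Xx (atom_translate Y_gt0 fragX atomX).
have cK : #|K| = #|X| by rewrite defX card_rcoset.
have XZ : #|X * side Y b| = #|X| + excess Y (b, X).
  by rewrite excessE subnKC ?leq_card_mul_side.
have X_lt : #|X| < #|gT| by have := atom_card_le Y_gt0 fragX atomX; lia.
have XN : #|X| %| N.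
  by rewrite -cK proper_dvdn // properEcard subsetT cardsT cK X_lt.
have Xk : #|X| %| excess Y (b, X).
  rewrite -(dvdn_addr _ (dvdnn #|X|)) -XZ -{1}cK defX -mulgA.
  exact: dvdn_card_Gmul.
have Y_le : 2 * N < #|X| + excess Y (b, X).
  by rewrite -XZ (leq_trans Y_gt) // -(card_side Y b) (leq_card_mulr _ Xx).
rewrite leqNgt; apply/negP => X0Y_small.
have k_lt : excess Y (b, X) < 2 * N.
  have X0Y : #|X0| <= #|X0 * Y| := leq_card_mul_side Y_gt0 X0 true.
  have [+ _] := atomX _ _ frag0.
  have -> : excess Y (true, X0) = #|X0 * Y| - #|X0| by [].
  lia.
move: Y_le k_lt; case/dvdnP: XN => r ->; case/dvdnP: Xk => q ->.
by rewrite mulnA -mulSn !ltn_pmul2r //; lia.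
Qed.

Lemma card_mul_disjoint (A B C : {set gT}) :
  2 * N < #|A| -> 2 * N < #|B| -> C != set0 -> A * B :&: C = set0 ->
  #|A| + #|B| + 2 * #|C| + 4 * N <= 2 * #|gT|.
Proof.
move=> A_gt B_gt C_n0 ABC; rewrite -card_gt0 in C_n0.
have CB : C * B^-1 \subset ~: A by apply: mul_disjoint_sub.
have CA : C^-1 * A \subset ~: B^-1.
  rewrite -[A in _ * A]invgK; apply: mul_disjoint_sub.
  by rewrite -invMg -invIg ABC; apply/setP => u; rewrite !inE.
have cCB : #|C * B^-1| <= #|~: A| := subset_leq_card CB.
have cCA : #|C^-1 * A| <= #|~: B^-1| := subset_leq_card CA.
have cA : #|A| + #|~: A| = #|gT| := cardsC A.
have cB : #|B^-1| + #|~: B^-1| = #|gT| := cardsC B^-1.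
have Bi_gt : 2 * N < #|B^-1| by rewrite card_invg.
have Ci_gt0 : 0 < #|C^-1| by rewrite card_invg.
have CB_lt : #|C * B^-1| < #|gT| by lia.
have CA_lt : #|C^-1 * A| < #|gT| by lia.
have expB : #|C| + 2 * N <= #|C * B^-1| :=
  card_mul_expansion Bi_gt C_n0 CB_lt.
have expA : #|C^-1| + 2 * N <= #|C^-1 * A| :=
  card_mul_expansion A_gt Ci_gt0 CA_lt.
have cBi : #|B^-1| = #|B| := card_invg B.
have cCi : #|C^-1| = #|C| := card_invg C.
lia.
Qed.

End Expansion.

Theorem lemma2 (n : nat) (A B C : {set Z5n n}) :
  (1 <= n)%N ->
  sumset A B :&: C = set0 ->
  (2 * 5 ^ n.-1 < minn #|A| #|B|)%N ->
  C != set0 ->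
  (#|A| + #|B| + 2 * #|C| <= 6 * 5 ^ n.-1)%N.
Proof.
move=> n_ge1 ABC; rewrite leq_min => /andP[A_gt B_gt] C_n0.
have cardV : #|Z5n n| = 5 ^ n.-1.+1 by rewrite card_mx card_ord mul1n prednK.
have proper_dvdn (H : {group Z5n n}) :
    H \proper [set: Z5n n] -> #|H| %| 5 ^ n.-1.
  exact: proper_subgroup_dvdn.
have bound : #|A| + #|B| + 2 * #|C| + 4 * 5 ^ n.-1 <= 2 * #|Z5n n| :=
  card_mul_disjoint proper_dvdn A_gt B_gt C_n0 ABC.
rewrite cardV expnS in bound; lia.
Qed.
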